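(* For $n\in\mathbb{N}$, let $G_n$ be the sink parity game with player 0 vertices $a_1,\dots,a_n$, player 1 vertices $b_1,\dots,b_{n+1}$ and sink $\top$, with priorities $\pi(a_i)=2i+1$ and $\pi(b_i)=2i+2$, and write $a_{n+1}:=\top$. For every $i\in[n]$, $a_i$ has an edge to $a_{i+1}$ with Bland number $2i-1$ and an edge to $b_{i+1}$ with Bland number $2i$, and $b_i$ has edges to $b_{i+1}$ and to $a_{i+1}$; $b_{n+1}$ has a single edge to $\top$, and $\top$ has its self-loop. Let $\sigma_0$ be the player 0 strategy with $\sigma_0(a_i)=a_{i+1}$ for all $i\in[n]$. Then strategy improvement with Bland's rule, started at $\sigma_0$, takes $2^n-1$ iterations to solve $G_n$. Moreover, the order of the valuations of $a_1$ and $b_1$ changes in every iteration (i.e. between any two consecutive strategies of the run, which of $\mathrm{val}(a_1)$, $\mathrm{val}(b_1)$ is larger with respect to $\triangleleft$ switches).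
   Context: A sink parity game is a tuple $(V_0,V_1,E,\pi)$ specifying a directed graph on $V_G=V_0\cup V_1\cup\{\top\}$ in which every vertex has an outgoing edge, the sink $\top$ has only the self-loop as outgoing edge, and $\pi:V_G\to\mathbb{Z}\cup\{-\infty\}$ is a priority function with $\pi(\top)=-\infty$ (only at $\top$). Player $i$ owns $V_i$; player 0 edges are edges leaving $V_0$. A player-$i$ strategy is a map $\sigma:V_i\to V_G$ along edges; $E_\sigma$ consists of the edges $(v,\sigma(v))$, $v\in V_i$, and all edges leaving vertices not in $V_i$. A player 0 strategy is admissible if every cycle of $E_\sigma$ not containing $\top$ has even highest priority. For finite multisets $S_1,S_2$ of integers, $S_1\triangleleft S_2$ means $\sum_{s\in S_1}(-|V_0\cup V_1|)^s<\sum_{s\in S_2}(-|V_0\cup V_1|)^s$ (with multiplicity). For admissible $\sigma$, with $\bar\sigma$ an optimal (valuation-minimizing) counterstrategy of player 1, the play from $v_0$ is a simple path $v_0,\dots,v_k,\top$ and $\mathrm{val}_\sigma(v_0)=\{\pi(v_0),\dots,\pi(v_k)\}$ (multiset). A player 0 edge $(v,w)$ is an improving switch for $\sigma$ if $\mathrm{val}_\sigma(w)\triangleright\mathrm{val}_\sigma(\sigma(v))$; applying it redirects $v$ to $w$. Strategy improvement repeatedly applies one improving switch until none exists (optimal strategy); each application is one iteration. Bland's rule applies the improving switch with the smallest Bland number. *)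

From mathcomp Require Import all_boot all_order all_algebra.
Set Implicit Arguments. Unset Strict Implicit. Unset Printing Implicit Defensive.
Import Order.TTheory GRing.Theory Num.Theory.
Local Open Scope ring_scope.

(* A sink parity game: finite vertex type, the sink [sink], the set of
   player-0 vertices [own0] (every vertex that is neither in own0 nor the
   sink belongs to player 1), the edge relation, priorities and Bland
   numbers of (player 0) edges.  The priority of the sink is -oo: the value
   [prio sink] is never used (the sink is excluded from valuations and cycles
   through the sink are excluded from the admissibility condition). *)
Record spg := SPG {
  vtx : finType;
  sink : vtx;
  own0 : pred vtx;
  edge : rel vtx;
  prio : vtx -> int;
  bland : vtx -> vtx -> nat
}.
Arguments sink : clear implicits.
Arguments own0 : clear implicits.
Arguments edge : clear implicits.
Arguments prio : clear implicits.
Arguments bland : clear implicits.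

Section SPG.
Variable G : spg.
Local Notation V := (vtx G).

(* |V_0 \cup V_1| *)
Definition nV : nat := #|V|.-1.

Definition mweight (S : seq int) : rat := \sum_(s <- S) (- (nV%:R : rat)) ^ s.

Definition mlt (S1 S2 : seq int) : bool := mweight S1 < mweight S2.

(* A player-0 strategy is a function V -> V; only its values on own0 matter. *)
Definition strategy := V -> V.

Definition Esig (s : strategy) : rel V :=
  fun u w => if own0 G u then w == s u else edge G u w.

Definition is_strategy (s : strategy) : Prop :=
  forall v, own0 G v -> edge G v (s v).

Definition maxprio (c : seq V) : int :=
  foldr Num.max (prio G (head (sink G) c)) [seq prio G x | x <- c].

Definition admissible (s : strategy) : Prop :=
  is_strategy s /\
  forall c : seq V, c != [::] -> cycle (Esig s) c -> sink G \notin c ->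
    (2 %| maxprio c)%Z.

(* plays of sigma against a counterstrategy, from v: simple E_sigma-paths
   v, v_1, ..., top  (p lists the vertices after v) *)
Definition play (s : strategy) (v : V) (p : seq V) : bool :=
  [&& path (Esig s) v p, last v p == sink G & uniq (v :: p)].

Definition pmset (v : V) (p : seq V) : seq int :=
  [seq prio G x | x <- v :: p & x != sink G].

(* S is val_sigma(v): the multiset of the play of sigma against an optimal
   (valuation-minimizing) counterstrategy *)
Definition is_val (s : strategy) (v : V) (S : seq int) : Prop :=
  (exists p, play s v p /\ S = pmset v p) /\
  (forall p, play s v p -> ~~ mlt (pmset v p) S).

Definition improving (s : strategy) (v w : V) : Prop :=
  own0 G v /\ edge G v w /\
  exists Sw Ss, is_val s w Sw /\ is_val s (s v) Ss /\ mlt Ss Sw.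

Definition switch (s : strategy) (v w : V) : strategy :=
  fun x => if x == v then w else s x.

Definition bland_step (s s' : strategy) : Prop :=
  exists v w, improving s v w /\
    (forall v' w', improving s v' w' -> (bland G v w <= bland G v' w')%N) /\
    (forall x, s' x = switch s v w x).

Definition optimal (s : strategy) : Prop := forall v w, ~ improving s v w.

End SPG.

(* inl (inl i) = a_{i+1} (i < n), inl (inr j) = b_{j+1} (j < n+1), inr tt = top *)
Definition Gv (n : nat) : finType := ('I_n + 'I_n.+1 + unit)%type.

Definition Gtop (n : nat) : Gv n := inr tt.

(* a_i, 1-indexed; a_i := top when i is not in [1, n] (so a_{n+1} = top) *)
Definition av (n i : nat) : Gv n :=
  match i with
  | 0 => Gtop n
  | k.+1 => match (insub k : option 'I_n) with
            | Some o => inl (inl o) | None => Gtop n end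
  end.

(* b_i, 1-indexed, for i in [1, n+1]; top otherwise *)
Definition bv (n i : nat) : Gv n :=
  match i with
  | 0 => Gtop n
  | k.+1 => match (insub k : option 'I_n.+1) with
            | Some o => inl (inr o) | None => Gtop n end
  end.

Definition Gown0 (n : nat) : pred (Gv n) :=
  fun x => if x is inl (inl _) then true else false.

Definition Gedge (n : nat) : rel (Gv n) :=
  fun x y => match x with
  | inl (inl i) => (y == av n i.+2) || (y == bv n i.+2)
  | inl (inr j) => if (j < n)%N then (y == bv n j.+2) || (y == av n j.+2)
                   else y == Gtop n
  | inr _ => y == Gtop n
  end.

(* pi(a_i) = 2i+1, pi(b_i) = 2i+2 (1-indexed); the sink gets a dummy value,
   its priority -oo is never used *)
Definition Gprio (n : nat) (x : Gv n) : int :=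
  match x with
  | inl (inl i) => (2 * i.+1 + 1)%:Z
  | inl (inr j) => (2 * j.+1 + 2)%:Z
  | inr _ => 0
  end.

Definition Gbland (n : nat) (x y : Gv n) : nat :=
  match x with
  | inl (inl i) => if y == av n i.+2 then (2 * i.+1 - 1)%N else (2 * i.+1)%N
  | _ => 0%N
  end.

Definition Ggame (n : nat) : spg :=
  @SPG (Gv n) (Gtop n) (@Gown0 n) (@Gedge n) (@Gprio n) (@Gbland n).

Definition sigma0 (n : nat) : strategy (Ggame n) :=
  fun x => match x with
  | inl (inl i) => av n i.+2
  | _ => x
  end.

Arguments Gtop : clear implicits.
Arguments av : clear implicits.
Arguments bv : clear implicits.
Arguments sigma0 : clear implicits.

(* The k-th strategy of the run is sigma_k, which sends a_i to b_(i+1) exactly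
   when bits i-1 and i of k differ, i.e. it follows the i-th digit of the Gray
   code of k.  Every play of sigma_k is acyclic, and player 1's best reply at
   b_i goes to b_(i+1) iff bit i of k is set; so valuations are obtained by
   following these moves down to the sink.  By downward induction on i, bit i-1
   of k decides which of a_i, b_i has the smaller valuation, by a margin of
   N^(2i+1) = |(-N)^pi(a_i)|, which dominates all lower priorities.  Hence a_i carries an
   improving switch iff bit i-1 of k is 0, Bland's rule picks the least such i,
   and performing that switch is exactly incrementing k in binary (one digit of
   the Gray code flips).  The run thus visits k = 0, ..., 2^n - 1, and as bit 0
   flips at every step, so does the order of val(a_1) and val(b_1). *)

From mathcomp Require Import all_boot all_order all_algebra.
From mathcomp Require Import zify lra.
From Stdlib Require Import FunctionalExtensionality.
Set Implicit Arguments. Unset Strict Implicit. Unset Printing Implicit Defensive.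
Import Order.TTheory GRing.Theory Num.Theory.
Local Open Scope ring_scope.

Section Valuations.
Variable G : spg.
Local Notation V := (vtx G).
Local Notation top := (sink G).

Lemma mweight_cons a S : mweight G (a :: S) = (- (nV G)%:R) ^ a + mweight G S.
Proof. by rewrite /mweight big_cons. Qed.

Lemma is_val_mweight (s : strategy G) v S1 S2 :
  is_val s v S1 -> is_val s v S2 -> mweight G S1 = mweight G S2.
Proof.
move=> [[p1 [play1 ->]] min1] [[p2 [play2 ->]] min2].
have := min1 _ play2; have := min2 _ play1; rewrite /mlt -!leNgt => le12 le21.
by apply/eqP; rewrite eq_le le12 le21.
Qed.

Lemma pmset_cons v w p : v != top -> pmset v (w :: p) = prio G v :: pmset w p.
Proof. by move=> vtop; rewrite /pmset /= vtop. Qed.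

Lemma play_behead (s : strategy G) v w p :
  play s v (w :: p) -> [/\ v != top, Esig s v w & play s w p].
Proof.
rewrite /play /= => /and3P[/andP[vw wp] wp_top /andP[vp wp_uniq]].
split=> //; last by rewrite wp wp_top.
by apply: contraNneq vp => ->; rewrite -(eqP wp_top) mem_last.
Qed.

Section Ranked.
Variables (s : strategy G) (rank : V -> nat).
Hypothesis rank_decr : forall v w, v != top -> Esig s v w -> (rank w < rank v)%N.
Hypothesis sink_loop : forall w, Esig s top w -> w = top.

Lemma path_rank u p :
  path (Esig s) u p -> {in p, forall y, y = top \/ (rank y < rank u)%N}.
Proof.
elim: p u => [|z p IH] u //= /andP[uz /IH zp] y; rewrite inE.
case: (eqVneq u top) => [utop | /rank_decr/(_ uz) zu].
  move: uz; rewrite utop => /sink_loop ztop.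
  by case/predU1P => [-> | /zp]; [left | rewrite ztop].
case/predU1P => [-> | /zp [|yz]]; [by right | by left | right].
exact: ltn_trans zu.
Qed.

Lemma cycle_mem_sink c : c != [::] -> cycle (Esig s) c -> top \in c.
Proof.
case: c => [|x c] //= _ /path_rank /(_ x); rewrite mem_rcons mem_head ltnn.
by case=> // <-; rewrite mem_head.
Qed.

Lemma ranked_admissible : is_strategy s -> admissible s.
Proof. by split=> // c c_nil /(cycle_mem_sink c_nil) ->. Qed.

Variable succ : V -> V.
Hypothesis succ_edge : forall v, v != top -> Esig s v (succ v).

(* [rank v] bounds the length of the play from [v], so it is enough fuel. *)
Fixpoint succ_prios (fuel : nat) (v : V) : seq int :=
  if fuel is f.+1 then
    (if v == top then [::] else prio G v :: succ_prios f (succ v))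
  else [::].

Definition play_prios (v : V) : seq int := succ_prios (rank v) v.

Lemma rank_succ v : v != top -> (rank (succ v) < rank v)%N.
Proof. by move=> vtop; apply: rank_decr (succ_edge vtop). Qed.

Lemma succ_prios_fuel f1 f2 v :
  (rank v <= f1)%N -> (rank v <= f2)%N -> succ_prios f1 v = succ_prios f2 v.
Proof.
elim: f1 f2 v => [|f1 IH] [|f2] v //=; case: (eqVneq v top) => // vtop;
  have := rank_succ vtop; try lia.
by move=> *; congr (_ :: _); apply: IH; lia.
Qed.

Lemma play_prios_sink : play_prios top = [::].
Proof. by rewrite /play_prios; case: (rank top) => //= ?; rewrite eqxx. Qed.

Lemma play_prios_cons v : v != top -> play_prios v = prio G v :: play_prios (succ v).
Proof.
move=> vtop; rewrite /play_prios; case: (rank v) (rank_succ vtop) => [|r] //= lt.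
by rewrite (negPf vtop) (@succ_prios_fuel r (rank (succ v))).
Qed.

Lemma play_prios_play v : exists2 p, play s v p & play_prios v = pmset v p.
Proof.
have [r] := ubnP (rank v); elim: r v => // r IH v; rewrite ltnS => rv.
case: (eqVneq v top) => [-> | vtop].
  by exists [::]; rewrite ?play_prios_sink /play /pmset //= eqxx.
have [p play_p prios_p] := IH _ (leq_trans (rank_succ vtop) rv).
exists (succ v :: p); last by rewrite play_prios_cons ?pmset_cons ?prios_p.
move: play_p; rewrite /play => /and3P[p_path p_last p_uniq].
have vp : path (Esig s) v (succ v :: p) by rewrite /= succ_edge.
rewrite /play vp p_last /=; move: p_uniq => /= /andP[-> ->].
rewrite !andbT; apply/negP => /(path_rank vp) [/eqP | ]; by rewrite ?(negPf vtop) ?ltnn.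
Qed.

Hypothesis succ_min : forall v w, v != top -> Esig s v w ->
  mweight G (play_prios (succ v)) <= mweight G (play_prios w).

Lemma play_prios_min v p : play s v p -> mweight G (play_prios v) <= mweight G (pmset v p).
Proof.
elim: p v => [|w p IH] v.
  by rewrite /play /= andbT => /eqP ->; rewrite play_prios_sink /pmset /= eqxx.
case/play_behead => vtop vw /IH wp.
rewrite play_prios_cons // pmset_cons // !mweight_cons lerD2l.
exact: le_trans (succ_min vtop vw) wp.
Qed.

Lemma play_prios_is_val v : is_val s v (play_prios v).
Proof.
split; first by have [p ? ?] := play_prios_play v; exists p.
by move=> p /play_prios_min; rewrite /mlt -leNgt.
Qed.

End Ranked.
End Valuations.

Local Open Scope nat_scope.

Definition bit (k i : nat) : bool := odd (k %/ 2 ^ i).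

Lemma bit0 k : bit k 0 = odd k.
Proof. by rewrite /bit expn0 divn1. Qed.

Lemma bitS k i : bit k i.+1 = bit k./2 i.
Proof. by rewrite /bit expnS divnMA divn2. Qed.

Lemma bit_small n k i : k < 2 ^ n -> n <= i -> bit k i = false.
Proof. by move=> kn ni; rewrite /bit divn_small // (leq_trans kn) ?leq_exp2l. Qed.

Lemma bit_succ j k : (forall i, i < j -> bit k i) -> ~~ bit k j ->
  forall i, bit k.+1 i = if i < j then false else (i == j) || bit k i.
Proof.
elim: j k => [|j IH] k low kj [|i].
- by rewrite !bit0 /= -bit0 (negPf kj).
- by rewrite !bitS -uphalfE uphalf_half -bit0 (negPf kj).
- by rewrite !bit0 /= -bit0 low.
rewrite !bitS -uphalfE uphalf_half -bit0 low // add1n IH ?ltnS //.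
  by move=> i' ij; rewrite -bitS low.
by rewrite -bitS.
Qed.

Lemma low_bits_leq m k : (forall i, i < m -> bit k i) -> 2 ^ m - 1 <= k.
Proof.
elim: m k => [|m IH] k low; first by rewrite expn0.
have := IH k./2 (fun i im => etrans (esym (bitS k i)) (low i.+1 im)).
have := odd_double_half k; rewrite -bit0 low // -muln2 expnS.
have := expn_gt0 2 m; lia.
Qed.

Lemma bit_exp_pred n i : i < n -> bit (2 ^ n - 1) i.
Proof.
elim: n i => [|n IH] i // ltin.
have expSE : 2 ^ n.+1 - 1 = true + (2 ^ n - 1).*2.
  by rewrite expnS -muln2; have := expn_gt0 2 n; lia.
case: i ltin => [|i] ltin; first by rewrite bit0 expSE oddD odd_double.
by rewrite bitS expSE half_bit_double IH.
Qed.

Lemma lowest_zero_bit n k : k < 2 ^ n - 1 ->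
  exists j, [/\ j < n, forall i, i < j -> bit k i & ~~ bit k j].
Proof.
move=> kn; have [|j kj jmin] := ex_minnP (_ : exists i, ~~ bit k i).
  by exists n; rewrite (bit_small _ (leqnn n)) //; lia.
have low i : i < j -> bit k i by move=> ij; apply/negPn/negP => /jmin; lia.
exists j; split=> //; rewrite ltnNge; apply: contraTN kn => nj; rewrite -leqNgt.
by apply: low_bits_leq => i ni; apply: low; apply: leq_trans nj.
Qed.

Definition gray (k i : nat) : bool := bit k i != bit k i.+1.

Lemma gray_succ j k : (forall i, i < j -> bit k i) -> ~~ bit k j ->
  forall i, gray k.+1 i = (i == j) (+) gray k i.
Proof.
move=> low kj i; rewrite /gray !(bit_succ low kj).
case: (ltngtP i j) => [ij | ji | ->].
- rewrite (low i ij); case: (ltngtP i.+1 j) => [ij' | ? | ij']; first by rewrite low.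
    by lia.
  by rewrite ij' (negPf kj).
- have -> : (i.+1 < j) = false by lia.
  by rewrite (gtn_eqF (ltn_trans ji (ltnSn i))).
- by rewrite ltnNge leqnSn (gtn_eqF (ltnSn j)) (negPf kj); case: (bit k j.+1).
Qed.

Local Open Scope ring_scope.

Section GrayGame.
Variable n : nat.
Local Notation G := (Ggame n).
Local Notation top := (Gtop n).

Lemma av_lt i (i_n : (i < n)%N) : av n i.+1 = inl (inl (Ordinal i_n)).
Proof. by rewrite /av insubT. Qed.

Lemma av_ge i : (n <= i)%N -> av n i.+1 = top.
Proof. by move=> n_i; rewrite /av insubF // ltnNge n_i. Qed.

Lemma bv_lt i (i_n : (i < n.+1)%N) : bv n i.+1 = inl (inr (Ordinal i_n)).
Proof. by rewrite /bv insubT. Qed.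

Lemma bv_ge i : (n.+1 <= i)%N -> bv n i.+1 = top.
Proof. by move=> n_i; rewrite /bv insubF // ltnNge n_i. Qed.

Arguments av : simpl never.
Arguments bv : simpl never.

Definition abv (b : bool) (i : nat) : Gv n := if b then bv n i else av n i.
Arguments abv : simpl never.

Lemma abv_top b i : (n < i)%N -> abv b i.+1 = top.
Proof. by move=> n_i; rewrite /abv av_ge ?bv_ge ?if_same // ltnW. Qed.

Definition gray_strategy (k : nat) : strategy G :=
  fun x => if x is inl (inl o) then abv (gray k o) o.+2 else x.

Definition opt_succ (k : nat) (x : vtx G) : vtx G :=
  match x with
  | inl (inl o) => abv (gray k o) o.+2
  | inl (inr o) => abv (bit k o.+1) o.+2
  | inr _ => top
  end.

Definition rank (x : vtx G) : nat :=
  match x with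
  | inl (inl o) => n.+2 - o
  | inl (inr o) => n.+2 - o
  | inr _ => 0
  end.

Lemma rank_abv b i : (i <= n)%N -> (rank (abv b i.+2) < n.+2 - i)%N.
Proof.
move=> i_n; rewrite /abv; case: b.
  by case: (ltnP i.+1 n.+1) => [lt | ge]; rewrite ?(bv_lt lt) ?bv_ge //=; lia.
by case: (ltnP i.+1 n) => [lt | ge]; rewrite ?(av_lt lt) ?av_ge //=; lia.
Qed.

Lemma Esig_gray k (x w : Gv n) : Esig (gray_strategy k) x w =
  match x with
  | inl (inl o) => w == abv (gray k o) o.+2
  | inl (inr o) => (w == abv true o.+2) || (w == abv false o.+2)
  | inr _ => w == top
  end.
Proof.
rewrite /Esig; case: x => [[o|o]|[]] //=; case: ifP => // /negbT.
rewrite -leqNgt => n_o; rewrite /abv av_ge ?bv_ge ?orbb //; lia.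
Qed.

Lemma gray_rank_decr k v w :
  v != top -> Esig (gray_strategy k) v w -> (rank w < rank v)%N.
Proof.
rewrite Esig_gray; case: v => [[o|o]|[]] // _.
  by move/eqP->; apply: rank_abv; apply: ltnW.
by case/orP => /eqP->; apply: rank_abv; rewrite -ltnS.
Qed.

Lemma gray_sink_loop k w : Esig (gray_strategy k) top w -> w = top.
Proof. by rewrite Esig_gray => /eqP. Qed.

Lemma opt_succ_edge k v : v != top -> Esig (gray_strategy k) v (opt_succ k v).
Proof. by rewrite Esig_gray; case: v => [[o|o]|[]] //= _; case: bit; rewrite eqxx ?orbT. Qed.

Lemma gray_admissible k : admissible (gray_strategy k).
Proof.
apply: (@ranked_admissible G _ _ (@gray_rank_decr k) (@gray_sink_loop k)).
by case=> [[o|o]|[]] //= _; rewrite /abv; case: gray; rewrite eqxx ?orbT.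
Qed.

Definition gray_val (k : nat) : vtx G -> seq int := play_prios rank (opt_succ k).

Definition weight (k : nat) (v : vtx G) : rat := mweight G (gray_val k v).

Local Notation base := ((2 * n + 1)%:R : rat).

Definition apow (o : nat) : rat := base ^+ (2 * o + 3).

Lemma apow_gt0 o : 0 < apow o.
Proof. by rewrite exprn_gt0 // ltr0n; lia. Qed.

Lemma apowS o : apow o.+1 = base * (base * apow o).
Proof. by rewrite /apow -!exprS; congr (_ ^+ _); lia. Qed.

Lemma nV_Ggame : nV G = (2 * n + 1)%N.
Proof. by rewrite /nV /= !card_sum !card_ord card_unit; lia. Qed.

Lemma weight_top k : weight k top = 0.
Proof. by rewrite /weight /gray_val play_prios_sink /mweight big_nil. Qed.

Lemma weight_cons k v : v != top ->
  weight k v = (- (nV G)%:R) ^ prio G v + weight k (opt_succ k v).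
Proof.
move=> vtop; rewrite /weight /gray_val -mweight_cons.
by rewrite (@play_prios_cons G _ _ (@gray_rank_decr k) _ (@opt_succ_edge k)).
Qed.

Lemma weight_a k (o : 'I_n) :
  weight k (inl (inl o)) = - apow o + weight k (abv (gray k o) o.+2).
Proof.
rewrite weight_cons //.
have -> : prio G (inl (inl o)) = (2 * o + 3)%N :> int by apply: (congr1 Posz); lia.
by rewrite nV_Ggame -exprnP exprNn -signr_odd oddD oddM mulN1r.
Qed.

Lemma weight_b k (o : 'I_n.+1) :
  weight k (inl (inr o)) = base * apow o + weight k (abv (bit k o.+1) o.+2).
Proof.
rewrite weight_cons //.
have -> : prio G (inl (inr o)) = (2 * o + 3).+1%N :> int by apply: (congr1 Posz); lia.
by rewrite nV_Ggame -exprnP exprNn -signr_odd /= oddD oddM mul1r exprS.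
Qed.

Definition bit_gap (k o : nat) : Prop :=
  weight k (abv (bit k o) o.+1) + apow o <= weight k (abv (~~ bit k o) o.+1).

Lemma bit_gap_last k : (k < 2 ^ n)%N -> bit_gap k n.
Proof.
move=> kn; rewrite /bit_gap (bit_small kn) // /abv /= av_ge // bv_lt weight_top.
rewrite weight_b abv_top // weight_top add0r addr0.
by rewrite ler_pMl ?apow_gt0 // ler1n; lia.
Qed.

Lemma bit_gap_step k o : (o < n)%N -> bit_gap k o.+1 -> bit_gap k o.
Proof.
move=> o_n; rewrite /bit_gap /abv (av_lt o_n) (bv_lt (ltnW o_n)).
rewrite !(fun_if (weight k)) weight_a weight_b apowS /gray.
have base_ge3 : 3 <= base by rewrite ler_nat; lia.
have P_gt0 := apow_gt0 o.
have Q_ge0 : 0 <= base * apow o by rewrite mulr_ge0 // ?ltW // (le_trans _ base_ge3).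
have key : base * apow o + 2 * apow o <= base * (base * apow o).
  by rewrite mulrA -mulrDl ler_pM2r //; nra.
move: Q_ge0 key; set P := apow o; set Q := base * P; set R := base * Q.
by case: (bit k o); case: (bit k o.+1) => /=; lra.
Qed.

Lemma weight_bit_lt k o : (k < 2 ^ n)%N -> (o <= n)%N ->
  weight k (abv (bit k o) o.+1) < weight k (abv (~~ bit k o) o.+1).
Proof.
move=> kn o_n; suff : bit_gap k o by rewrite /bit_gap; have := apow_gt0 o; lra.
have gap d : (d <= n)%N -> bit_gap k (n - d).
  elim: d => [_ | d IH d_n]; first by rewrite subn0; apply: bit_gap_last.
  by apply: bit_gap_step; [lia | rewrite subnSK //; apply: IH; apply: ltnW].
by rewrite -(subKn o_n); apply: gap; rewrite leq_subr.
Qed.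

Lemma opt_succ_min k v w : (k < 2 ^ n)%N -> v != top ->
  Esig (gray_strategy k) v w -> weight k (opt_succ k v) <= weight k w.
Proof.
move=> kn; rewrite Esig_gray; case: v => [[o|o]|[]] //= _; first by move/eqP->.
case: (ltnP o n) => [o_n | n_o]; last by rewrite !abv_top // orbb => /eqP->.
have /ltW := weight_bit_lt kn o_n.
by case: (bit k o.+1) => le_ab /orP[] /eqP->.
Qed.

Lemma gray_is_val k v : (k < 2 ^ n)%N -> is_val (gray_strategy k) v (gray_val k v).
Proof.
move=> kn; apply: (@play_prios_is_val G _ _ (@gray_rank_decr k) (@gray_sink_loop k)).
  exact: opt_succ_edge.
by move=> ? ?; apply: opt_succ_min.
Qed.

Lemma is_val_weight k v S : (k < 2 ^ n)%N ->
  is_val (gray_strategy k) v S -> mweight G S = weight k v.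
Proof. by move=> kn /is_val_mweight; apply; apply: gray_is_val. Qed.

Lemma improving_gray k v w : (k < 2 ^ n)%N ->
  improving (gray_strategy k) v w <->
  exists o : 'I_n, [/\ v = inl (inl o), ~~ bit k o & w = abv (~~ gray k o) o.+2].
Proof.
move=> kn; have lt_succ (o : 'I_n) := weight_bit_lt kn (ltn_ord o : (o.+1 <= n)%N).
split.
  case: v => [[o|o]|[]] [] // _ [vw [Sw [Ss [wS [sS lt_sw]]]]]; exists o.
  move: lt_sw; rewrite /mlt (is_val_weight kn wS) (is_val_weight kn sS).
  move: vw (lt_succ o); rewrite /= /gray.
  by case: (bit k o); case: (bit k o.+1) => /orP[] /eqP-> /= lt1 lt2;
    first [by split | exfalso; lra].
case=> o [-> ko ->]; split=> //; split.
  by rewrite /= /abv; case: gray; rewrite eqxx ?orbT.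
exists (gray_val k (abv (~~ gray k o) o.+2)), (gray_val k (abv (gray k o) o.+2)).
do 2 (split; first exact: gray_is_val).
by move: (lt_succ o); rewrite /gray (negPf ko); case: (bit k o.+1).
Qed.

Lemma bland_a_bounds (o : 'I_n) w :
  (2 * o + 1 <= bland G (inl (inl o)) w <= 2 * o + 2)%N.
Proof. by rewrite /=; case: ifP; lia. Qed.

Lemma gray_strategy_succ k j (j_n : (j < n)%N) :
  (forall i, (i < j)%N -> bit k i) -> ~~ bit k j ->
  forall x, gray_strategy k.+1 x =
    switch (gray_strategy k) (inl (inl (Ordinal j_n))) (abv (~~ gray k j) j.+2) x.
Proof.
move=> low kj [[o|o]|[]] //; rewrite /switch /= (gray_succ low kj).
case: (eqVneq o (Ordinal j_n)) => [-> | o_j]; first by rewrite !eqxx.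
have -> : (inl (inl o) == inl (inl (Ordinal j_n)) :> Gv n) = false.
  by apply/eqP => -[] /eqP; apply/negP.
by rewrite (negbTE o_j : (o == j :> nat) = false).
Qed.

Lemma gray_bland_step k : (k < 2 ^ n - 1)%N ->
  bland_step (gray_strategy k) (gray_strategy k.+1).
Proof.
move=> kn; have kn' : (k < 2 ^ n)%N by lia.
have [j [j_n low kj]] := lowest_zero_bit kn.
exists (inl (inl (Ordinal j_n))), (abv (~~ gray k j) j.+2); split.
  by apply/(improving_gray _ _ kn'); exists (Ordinal j_n).
split; last exact: gray_strategy_succ.
move=> v w /(improving_gray _ _ kn') [o [-> ko ->]].
have j_o : (j <= o)%N by rewrite leqNgt; apply: contra ko => /low.
case: (ltngtP j o) j_o => // [j_lt_o | j_eq_o] _.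
  have /andP[_ bland_j] := bland_a_bounds (Ordinal j_n) (abv (~~ gray k j) j.+2).
  have /andP[bland_o _] := bland_a_bounds o (abv (~~ gray k o) o.+2).
  by apply: leq_trans bland_j (leq_trans _ bland_o); rewrite /=; lia.
by have -> : o = Ordinal j_n by apply: val_inj.
Qed.

Lemma gray_optimal : optimal (gray_strategy (2 ^ n - 1)).
Proof.
move=> v w /improving_gray [|o [_ ko _]]; first by have := expn_gt0 2 n; lia.
by rewrite bit_exp_pred in ko.
Qed.

Lemma gray_strategy0 : gray_strategy 0 = sigma0 n.
Proof.
by apply: functional_extensionality => -[[o|o]|[]] //=; rewrite /gray /bit !div0n.
Qed.

End GrayGame.

Theorem lemma15 (n : nat) :
  exists sig : nat -> strategy (Ggame n),
    sig 0%N = sigma0 n /\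
    (forall k, (k <= 2 ^ n - 1)%N -> admissible (sig k)) /\
    (forall k, (k < 2 ^ n - 1)%N -> bland_step (sig k) (sig k.+1)) /\
    optimal (sig (2 ^ n - 1)%N) /\
    (forall k, (k < 2 ^ n - 1)%N ->
       exists Sa Sb Sa' Sb',
         is_val (sig k) (av n 1) Sa /\ is_val (sig k) (bv n 1) Sb /\
         is_val (sig k.+1) (av n 1) Sa' /\ is_val (sig k.+1) (bv n 1) Sb' /\
         ((mlt (Ggame n) Sa Sb /\ mlt (Ggame n) Sb' Sa') \/ (mlt (Ggame n) Sb Sa /\ mlt (Ggame n) Sa' Sb'))).
Proof.
exists (@gray_strategy n); split; first exact: gray_strategy0.
split; first by move=> k _; apply: gray_admissible.
split; first exact: gray_bland_step.
split; first exact: gray_optimal.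
move=> k kn; have [kn0 kn1] : (k < 2 ^ n)%N /\ (k.+1 < 2 ^ n)%N by lia.
exists (gray_val k (av n 1)), (gray_val k (bv n 1)),
  (gray_val k.+1 (av n 1)), (gray_val k.+1 (bv n 1)).
do 4 (split; first exact: gray_is_val).
have := weight_bit_lt kn0 (leq0n n); have := weight_bit_lt kn1 (leq0n n).
by rewrite /mlt !bit0 oddS /abv; case: (odd k) => /= lt1 lt0; [right | left].
Qed.
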